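(* Let $F\colon[0,+\infty)^N\to[0,+\infty)$ be a continuous metric preserving function and let $(X_1,d_{X_1}),\dots,(X_N,d_{X_N})$ be complete metric spaces. Then $(X_1\times\cdots\times X_N,d_F)$ is complete.
   Context: A function $F\colon[0,+\infty)^N\to[0,+\infty)$ is metric preserving if for any metric spaces $(X_1,d_1),\dots,(X_N,d_N)$, $d_F((x_i),(x'_i)):=F(d_1(x_1,x'_1),\dots,d_N(x_N,x'_N))$ is a metric on $X_1\times\cdots\times X_N$. *)

From Stdlib Require Import Reals.
From Stdlib Require Vectors.Fin.
Open Scope R_scope.

Definition is_metric (X : Type) (d : X -> X -> R) : Prop :=
  (forall x y, 0 <= d x y) /\
  (forall x y, d x y = 0 <-> x = y) /\
  (forall x y, d x y = d y x) /\
  (forall x y z, d x z <= d x y + d y z).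

Definition nonneg_vec (N : nat) (v : Fin.t N -> R) : Prop :=
  forall i, 0 <= v i.

(* F : [0,+oo)^N -> [0,+oo) (only its values on [0,+oo)^N matter). *)
Definition maps_nonneg (N : nat) (F : (Fin.t N -> R) -> R) : Prop :=
  forall v, nonneg_vec N v -> 0 <= F v.

Definition prod_dist (N : nat) (X : Fin.t N -> Type)
  (d : forall i, X i -> X i -> R) (F : (Fin.t N -> R) -> R)
  (x y : forall i, X i) : R :=
  F (fun i => d i (x i) (y i)).

Definition metric_preserving (N : nat) (F : (Fin.t N -> R) -> R) : Prop :=
  forall (X : Fin.t N -> Type) (d : forall i, X i -> X i -> R),
    (forall i, is_metric (X i) (d i)) ->
    is_metric (forall i, X i) (prod_dist N X d F).

(* Continuity of F on [0,+oo)^N (product topology = sup-norm topology). *)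
Definition continuous_on_nonneg (N : nat) (F : (Fin.t N -> R) -> R) : Prop :=
  forall v, nonneg_vec N v ->
    forall eps, 0 < eps -> exists delta, 0 < delta /\
      forall w, nonneg_vec N w ->
        (forall i, Rabs (w i - v i) < delta) -> Rabs (F w - F v) < eps.

Definition cauchy_seq (X : Type) (d : X -> X -> R) (u : nat -> X) : Prop :=
  forall eps, 0 < eps -> exists M : nat,
    forall m n, (M <= m)%nat -> (M <= n)%nat -> d (u m) (u n) < eps.

Definition converges_to (X : Type) (d : X -> X -> R) (u : nat -> X) (l : X) : Prop :=
  forall eps, 0 < eps -> exists M : nat, forall n, (M <= n)%nat -> d (u n) l < eps.

Definition complete (X : Type) (d : X -> X -> R) : Prop :=
  forall u, cauchy_seq X d u -> exists l, converges_to X d u l.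

(* A metric preserving F vanishes exactly at 0 and, by the triangle inequality in a
   suitable three-point "star" metric on one coordinate, F(eps e_i) <= 2 F(v) whenever
   v_i >= eps. Hence a d_F-Cauchy sequence is Cauchy in every coordinate; its
   coordinatewise limit is a d_F-limit by continuity of F at 0, since F(0) = 0. *)

From Stdlib Require Import Reals Lra.
From Stdlib Require Vectors.Fin.
From Stdlib Require Import ClassicalEpsilon FunctionalExtensionality.
Open Scope R_scope.

Lemma fin_eventually (N : nat) (P : Fin.t N -> nat -> Prop) :
  (forall i, exists M, forall n, (M <= n)%nat -> P i n) ->
  exists M, forall i n, (M <= n)%nat -> P i n.
Proof.
  induction N as [|N IH]; intros HP.
  - exists 0%nat. intro i. apply (Fin.case0 (fun _ => _) i).
  - destruct (HP Fin.F1) as [M1 HM1].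
    destruct (IH (fun j => P (Fin.FS j)) (fun j => HP (Fin.FS j))) as [M2 HM2].
    exists (Nat.max M1 M2). intros i n Hn.
    apply (Fin.caseS' i (fun i => P i n)).
    + apply HM1. eapply Nat.le_trans; [apply Nat.le_max_l | exact Hn].
    + intro j. apply HM2. eapply Nat.le_trans; [apply Nat.le_max_r | exact Hn].
Qed.

Lemma Rdist_metric : is_metric R Rdist.
Proof.
  split; [|split; [|split]].
  - intros x y. apply Rge_le, Rdist_pos.
  - apply Rdist_refl.
  - apply Rdist_sym.
  - intros x y z. apply Rdist_tri.
Qed.

Section StarMetric.

Variables (T : Type) (T_eq_dec : forall x y : T, {x = y} + {x <> y}) (h : T -> R).
Hypothesis h_pos : forall x, 0 < h x.

Definition star_dist (x y : T) : R := if T_eq_dec x y then 0 else h x + h y.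

Lemma star_dist_metric : is_metric T star_dist.
Proof.
  unfold star_dist.
  split; [|split; [|split]].
  - intros x y. destruct T_eq_dec; [lra|]. pose proof (h_pos x); pose proof (h_pos y); lra.
  - intros x y. destruct T_eq_dec as [Exy|Nxy]; split; auto; [|contradiction].
    pose proof (h_pos x); pose proof (h_pos y); lra.
  - intros x y. destruct (T_eq_dec x y), (T_eq_dec y x); subst; lra || contradiction.
  - intros x y z. pose proof (h_pos x); pose proof (h_pos y); pose proof (h_pos z).
    destruct (T_eq_dec x z), (T_eq_dec x y), (T_eq_dec y z); subst; lra || contradiction.
Qed.

End StarMetric.

Definition fin_single (N : nat) (i : Fin.t N) (a : R) : Fin.t N -> R :=
  fun j => if Fin.eq_dec j i then a else 0.

Section MetricPreserving.

Variables (N : nat) (F : (Fin.t N -> R) -> R).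
Hypothesis F_mp : metric_preserving N F.

Lemma metric_preserving_Rdist (v : Fin.t N -> R) : nonneg_vec N v ->
  F v = prod_dist N (fun _ => R) (fun _ => Rdist) F (fun _ => 0) v.
Proof.
  intro Hv. unfold prod_dist. f_equal. apply functional_extensionality; intro j.
  unfold Rdist. rewrite Rminus_0_l, Rabs_Ropp, Rabs_pos_eq; auto.
Qed.

Lemma metric_preserving_nonneg (v : Fin.t N -> R) : nonneg_vec N v -> 0 <= F v.
Proof.
  intro Hv. rewrite (metric_preserving_Rdist v Hv).
  apply (F_mp _ _ (fun _ => Rdist_metric)).
Qed.

Lemma metric_preserving_zero : F (fun _ => 0) = 0.
Proof.
  assert (H0 : nonneg_vec N (fun _ => 0)) by (intro; lra).
  rewrite (metric_preserving_Rdist _ H0).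
  apply (F_mp _ _ (fun _ => Rdist_metric)); reflexivity.
Qed.

Lemma metric_preserving_pos (v : Fin.t N -> R) :
  nonneg_vec N v -> v <> (fun _ => 0) -> 0 < F v.
Proof.
  intros Hv Hv0.
  destruct (Rle_lt_or_eq_dec _ _ (metric_preserving_nonneg v Hv)) as [|Hz]; auto.
  exfalso. apply Hv0. symmetry.
  rewrite (metric_preserving_Rdist v Hv) in Hz.
  apply (F_mp _ _ (fun _ => Rdist_metric)). auto.
Qed.

(* Star weights making 0, 1, 2 the points of a triangle with sides eps/2 + eps/2 = eps
   and eps/2 + (t - eps/2) = t on either side of 1. *)
Definition tripod_weight (eps t x : R) : R :=
  if Req_EM_T x 1 then t - eps / 2 else eps / 2.

Lemma metric_preserving_single_le (i : Fin.t N) (eps : R) (v : Fin.t N -> R) :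
  0 < eps -> nonneg_vec N v -> eps <= v i -> F (fin_single N i eps) <= 2 * F v.
Proof.
  intros Heps Hv Hvi.
  pose (D := fun j : Fin.t N =>
    if Fin.eq_dec j i then star_dist R Req_EM_T (tripod_weight eps (v i)) else Rdist).
  assert (HD : forall j, is_metric R (D j)).
  { intro j. unfold D. destruct Fin.eq_dec; [|apply Rdist_metric].
    apply star_dist_metric. intro x. unfold tripod_weight. destruct Req_EM_T; lra. }
  pose (x := fun _ : Fin.t N => 0).
  pose (y := fun j : Fin.t N => if Fin.eq_dec j i then 1 else v j).
  pose (z := fin_single N i 2).
  assert (Exz : prod_dist N (fun _ => R) D F x z = F (fin_single N i eps)).
  { unfold prod_dist. f_equal. apply functional_extensionality; intro j.
    unfold D, x, z, fin_single, star_dist, tripod_weight, Rdist.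
    destruct Fin.eq_dec; [repeat destruct Req_EM_T; lra|].
    rewrite Rminus_0_r. apply Rabs_R0. }
  assert (Exy : prod_dist N (fun _ => R) D F x y = F v).
  { unfold prod_dist. f_equal. apply functional_extensionality; intro j.
    unfold D, x, y, star_dist, tripod_weight, Rdist.
    destruct Fin.eq_dec; [subst; repeat destruct Req_EM_T; lra|].
    rewrite Rminus_0_l, Rabs_Ropp. apply Rabs_pos_eq, Hv. }
  assert (Eyz : prod_dist N (fun _ => R) D F y z = F v).
  { unfold prod_dist. f_equal. apply functional_extensionality; intro j.
    unfold D, z, y, fin_single, star_dist, tripod_weight, Rdist.
    destruct Fin.eq_dec; [subst; repeat destruct Req_EM_T; lra|].
    rewrite Rminus_0_r. apply Rabs_pos_eq, Hv. }
  pose proof (proj2 (proj2 (proj2 (F_mp _ _ HD))) x y z). lra.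
Qed.

Variables (X : Fin.t N -> Type) (d : forall i, X i -> X i -> R).
Hypothesis d_metric : forall i, is_metric (X i) (d i).

Lemma dist_vec_nonneg (x y : forall i, X i) : nonneg_vec N (fun i => d i (x i) (y i)).
Proof. intro i. apply (d_metric i). Qed.

Lemma cauchy_seq_component (u : nat -> forall i, X i) :
  cauchy_seq (forall i, X i) (prod_dist N X d F) u ->
  forall i, cauchy_seq (X i) (d i) (fun n => u n i).
Proof.
  intros Hu i eps Heps.
  assert (Hpos : 0 < F (fin_single N i eps)).
  { apply metric_preserving_pos.
    - intro j. unfold fin_single. destruct Fin.eq_dec; lra.
    - intro H. assert (Hi := f_equal (fun f => f i) H). simpl in Hi.
      unfold fin_single in Hi. destruct Fin.eq_dec; [lra | contradiction]. }
  destruct (Hu (F (fin_single N i eps) / 2)) as [M HM]; [lra|].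
  exists M. intros m n Hm Hn. specialize (HM m n Hm Hn). unfold prod_dist in HM.
  destruct (Rlt_or_le (d i (u m i) (u n i)) eps) as [|Hge]; auto.
  pose proof (metric_preserving_single_le i eps _ Heps (dist_vec_nonneg (u m) (u n)) Hge).
  lra.
Qed.

Hypothesis F_cont : continuous_on_nonneg N F.

Lemma converges_to_prod (u : nat -> forall i, X i) (l : forall i, X i) :
  (forall i, converges_to (X i) (d i) (fun n => u n i) (l i)) ->
  converges_to (forall i, X i) (prod_dist N X d F) u l.
Proof.
  intros Hul eps Heps.
  assert (H0 : nonneg_vec N (fun _ => 0)) by (intro; lra).
  destruct (F_cont _ H0 eps Heps) as [delta [Hdelta Hcont]].
  destruct (fin_eventually N (fun i n => d i (u n i) (l i) < delta)) as [M HM].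
  { intro i. apply Hul, Hdelta. }
  exists M. intros n Hn.
  assert (Hclose : forall i, Rabs (d i (u n i) (l i) - 0) < delta).
  { intro i. rewrite Rminus_0_r, Rabs_pos_eq by apply (d_metric i). auto. }
  specialize (Hcont _ (dist_vec_nonneg (u n) l) Hclose).
  rewrite metric_preserving_zero, Rminus_0_r in Hcont.
  eapply Rle_lt_trans; [apply Rle_abs | exact Hcont].
Qed.

End MetricPreserving.

Theorem mainTheorem20 (N : nat) (F : (Fin.t N -> R) -> R)
  (HFnn : maps_nonneg N F)
  (HFc : continuous_on_nonneg N F)
  (HFmp : metric_preserving N F)
  (X : Fin.t N -> Type) (d : forall i, X i -> X i -> R)
  (Hmet : forall i, is_metric (X i) (d i))
  (Hcomp : forall i, complete (X i) (d i)) :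
  complete (forall i, X i) (prod_dist N X d F).
Proof.
  intros u Hu.
  assert (Hlim : forall i, {l : X i | converges_to (X i) (d i) (fun n => u n i) l}).
  { intro i. apply constructive_indefinite_description, Hcomp.
    exact (cauchy_seq_component N F HFmp X d Hmet u Hu i). }
  exists (fun i => proj1_sig (Hlim i)).
  apply (converges_to_prod N F HFmp X d Hmet HFc).
  intro i. exact (proj2_sig (Hlim i)).
Qed.
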